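(* Let $X$ and $Y$ be random variables with mean zero, variance $\sigma^2\in(0,\infty)$, and densities $f_X$ and $f_Y$. Let $X^*$ and $Y^*$ have the zero bias distributions of $X$ and $Y$, with $f_{Y^*}$ the density of $Y^*$. Suppose there is $x_0\ge0$ such that 1. $t\mapsto f_X(t)/f_Y(t)$ is decreasing on $t\ge x_0$; 2. for each $x\ge x_0$ there is a constant $a_Y(x)$ depending only on $x$ such that $f_{Y^*}(t)/f_Y(t)\le a_Y(x)$ for all $t\ge x$. Then $\mathbb{P}(X^*\ge x)\le a_Y(x)\,\mathbb{P}(X\ge x)$ for all $x\ge x_0$.
   Context: Zero bias transform: for $X$ with mean zero and finite variance $\sigma^2$, $X^*$ has the zero bias distribution of $X$ if $\mathbb{E}[Xf(X)]=\sigma^2\mathbb{E}[f'(X^* )]$ for all absolutely continuous $f$ for which the expectations exist; $X^*$ is absolutely continuous with density $f_{X^*}(t)=\sigma^{-2}\mathbb{E}[X\mathbb{I}_{X>t}]$. *)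

From HB Require Import structures.
From mathcomp Require Import all_boot all_order all_algebra.
From mathcomp Require Import all_classical all_reals all_analysis.
Set Implicit Arguments. Unset Strict Implicit. Unset Printing Implicit Defensive.
Import Order.TTheory GRing.Theory Num.Theory.
Local Open Scope classical_set_scope.
Local Open Scope ring_scope.

Definition has_density d (T : measurableType d) (R : realType)
  (P : probability T R) (Z : {RV P >-> R}) (f : R -> R) : Prop :=
  forall A : set R, measurable A ->
    P (Z @^-1` A) = (\int[@lebesgue_measure R]_(t in A) (f t)%:E)%E.

Definition X_above d (T : measurableType d) (R : realType) (X : T -> R) (t : R)
  : T -> R := fun w => X w * ((t < X w)%R)%:R.

(* Density of the zero bias distribution of X (mean zero, variance s2):
   f_{X^*}(t) = s2^-1 * E[X 1_{X > t}]. *)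
Definition zero_bias_density d (T : measurableType d) (R : realType)
  (P : probability T R) (X : T -> R) (s2 : R) (t : R) : R :=
  s2^-1 * fine ('E_P[X_above X t])%E.

From HB Require Import structures.
From mathcomp Require Import all_boot all_order all_algebra.
From mathcomp Require Import all_classical all_reals all_analysis.
From mathcomp Require Import measurable_realfun.
Import Order.TTheory GRing.Theory Num.Theory.
Import numFieldNormedType.Exports.
Local Open Scope classical_set_scope.
Local Open Scope ring_scope.

(* For x0 <= t <= u the monotone likelihood ratio gives f_X(u) <= r(t) f_Y(u) with
   r(t) = max(f_X(t), 0) / f_Y(t).  Comparing the laws of X and Y above t yields
   E[X 1_{X>t}] <= r(t) E[Y 1_{Y>t}], i.e. f_{X^*}(t) <= r(t) f_{Y^*}(t), which is at
   most a_Y(x) max(f_X(t), 0) for t >= x.  Integrating over [x, +oo) gives the claim once the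
   set {t >= x0 | f_X(t) < 0}, where the bound vanishes, is cut out: it is an up-ray,
   hence measurable. *)

(* Densities are not assumed measurable, so the comparison lemmas below work
   directly with the supremum over simple functions defining the integral. *)
Section integral_nonmeasurable.
Local Open Scope ereal_scope.
Context {d : measure_display} {T : measurableType d} {R : realType}.
Variable mu : {measure set T -> \bar R}.
Import HBNNSimple.

Lemma ge0_le_integral_nonmeas {D : set T} {f g : T -> \bar R} :
  (forall x, D x -> 0 <= f x) -> (forall x, D x -> f x <= g x) ->
  \int[mu]_(x in D) f x <= \int[mu]_(x in D) g x.
Proof.
move=> f0 fg.
have g0 x : D x -> 0 <= g x by move=> Dx; exact: le_trans (f0 _ Dx) (fg _ Dx).
rewrite (@ge0_integralE _ _ _ mu D f f0) (@ge0_integralE _ _ _ mu D g g0).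
apply: le_ereal_sup => _ [h hf <-]; exists h => // x.
apply: le_trans (hf x) _; rewrite /patch; case: ifPn => // /[!inE] Dx.
exact: fg.
Qed.

Lemma ge0_integralZl_le_nonmeas {D : set T} {f : T -> \bar R} {k : R} :
  (0 <= k)%R -> (forall x, D x -> 0 <= f x) ->
  \int[mu]_(x in D) (k%:E * f x) <= k%:E * \int[mu]_(x in D) f x.
Proof.
move=> k0 f0; have [->|kn0] := eqVneq k 0%R.
  by rewrite integral0_eq ?mul0e// => x _; rewrite mul0e.
have kp : (0 < k)%R by rewrite lt_neqAle eq_sym kn0.
have kf0 x : D x -> 0 <= k%:E * f x by move=> Dx; rewrite mule_ge0 ?lee_fin ?f0.
rewrite (@ge0_integralE _ _ _ mu D _ kf0) (@ge0_integralE _ _ _ mu D f f0).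
apply: ge_ereal_sup => _ [h hf <-].
have ki0 : (0 <= k^-1)%R by rewrite invr_ge0 ltW.
pose h' := scale_nnsfun h ki0.
have -> : sintegral mu h = k%:E * sintegral mu h'.
  rewrite [X in _ = _ * X](eq_sintegral (cst k^-1 \* h)%R) // sintegralrM.
  by rewrite muleA -EFinM mulfV // mul1e.
rewrite lee_pmul2l ?lte_fin ?fin_numE //.
apply: ereal_sup_ubound; exists h' => // x /=.
have := hf x; rewrite /patch; case: ifPn => _ hx.
  by rewrite -(@lee_pmul2l _ k%:E) ?lte_fin ?fin_numE // -EFinM mulrA mulfV ?mul1r.
by move: hx; rewrite /point /= !lee_fin => hx; rewrite mulr_ge0_le0.
Qed.

Lemma integral_le_scaled {D : set T} {f g : T -> R} {k : R} : (0 <= k)%R ->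
  (forall x, D x -> (0 <= g x)%R) -> (forall x, D x -> (f x <= k * g x)%R) ->
  \int[mu]_(x in D) (f x)%:E <= k%:E * \int[mu]_(x in D) (g x)%:E.
Proof.
move=> k0 g0 fg; rewrite integralE.
apply: (@le_trans _ _ (\int[mu]_(x in D) ((EFin \o f)^\+ x))).
  by rewrite -[leRHS]sube0 leeB // integral_ge0 // => x _; apply: funeneg_ge0.
apply: le_trans (ge0_integralZl_le_nonmeas (f := EFin \o g) k0 _); last first.
  by move=> x /g0; rewrite lee_fin.
apply: ge0_le_integral_nonmeas => [x _|x Dx]; first exact: funepos_ge0.
by rewrite funeposE ge_max -EFinM !lee_fin fg // mulr_ge0 ?g0.
Qed.

Lemma ge0_integral_le_scaled_measure {nu : {measure set T -> \bar R}} {A : set T}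
    {k : R} {f : T -> \bar R} : (0 <= k)%R ->
  (forall S, measurable S -> S `<=` A -> mu S <= k%:E * nu S) ->
  (forall x, 0 <= f x) -> (forall x, ~ A x -> f x = 0) ->
  \int[mu]_x f x <= k%:E * \int[nu]_x f x.
Proof.
move=> k0 mu_nu f0 fA.
rewrite (@ge0_integralTE _ _ _ mu f f0) (@ge0_integralTE _ _ _ nu f f0).
apply: ge_ereal_sup => _ [h hf <-].
apply: (@le_trans _ _ (k%:E * sintegral nu h)); last first.
  by apply: lee_wpmul2l; [rewrite lee_fin|apply: ereal_sup_ubound; exists h].
rewrite !sintegralE ge0_mule_fsumr; last exact: nnsfun_mulemu_ge0.
apply: lee_fsum => // r [y _ <-].
have [->|hy0] := eqVneq (h y) 0%R; first by rewrite !mul0e mule0.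
have hyA : h @^-1` [set h y] `<=` A.
  move=> z /= hz; apply/not_notP => Az.
  have := hf z; rewrite fA // hz lee_fin => hy_le0.
  by move: hy0; rewrite eq_le hy_le0 fun_ge0.
by rewrite muleCA lee_wpmul2l ?lee_fin ?fun_ge0 // mu_nu.
Qed.

End integral_nonmeasurable.

Lemma X_above_ge0 {d} {T : measurableType d} {R : realType} (X : T -> R) (t : R) w :
  0 <= t -> 0 <= X_above X t w.
Proof.
rewrite /X_above => t0; case: (ltP t (X w)) => [tX|_]; rewrite ?mulr1 ?mulr0 //.
exact: le_trans t0 (ltW tX).
Qed.

Lemma measurable_X_above_id {R : realType} (t : R) :
  measurable_fun [set: R] (X_above idfun t).
Proof.
apply: measurable_funM; first exact: measurable_id.
have /eq_measurable_fun :
    {in [set: R], \1_`]t, +oo[ =1 fun u : R => ((t < u)%R)%:R :> R}.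
  by move=> u _; rewrite indicE mem_setE in_itv/= andbT.
by apply; exact: measurable_indic.
Qed.

Section X_above.
Context {d : measure_display} {T : measurableType d} {R : realType}.
Context {P : probability T R}.

Lemma measurable_X_above (X : {RV P >-> R}) (t : R) :
  measurable_fun [set: T] (X_above X t).
Proof. exact: measurableT_comp (measurable_X_above_id t) (measurable_funP X). Qed.

Lemma expectation_X_above_ge0 (X : T -> R) (t : R) : 0 <= t ->
  (0 <= 'E_P[X_above X t])%E.
Proof.
by move=> t0; rewrite unlock; apply: integral_ge0 => w _; rewrite lee_fin X_above_ge0.
Qed.

Lemma expectation_X_above_fin_num (X : {RV P >-> R}) (t : R) :
  (X : T -> R) \in Lfun P 1 -> ('E_P[X_above X t] \is a fin_num)%E.
Proof.
move/Lfun1_integrable => Xint; apply/expectation_fin_num/Lfun1_integrable.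
apply: le_integrable Xint => //; first exact/measurableT_comp/measurable_X_above.
move=> w _ /=; rewrite /X_above lee_fin.
by case: ltP => _; rewrite ?mulr1 ?mulr0 ?normr0.
Qed.

Lemma expectation_X_above_distribution (X : {RV P >-> R}) (t : R) : 0 <= t ->
  ('E_P[X_above X t] = \int[distribution P X]_u (X_above idfun t u)%:E)%E.
Proof.
move=> t0; rewrite ge0_integral_distribution ?unlock //.
- by apply/measurable_EFinP; exact: measurable_X_above_id.
- by move=> u; rewrite lee_fin X_above_ge0.
Qed.

Lemma zero_bias_density_ge0 (X : T -> R) (s2 t : R) : 0 <= s2 -> 0 <= t ->
  0 <= zero_bias_density P X s2 t.
Proof.
move=> s0 t0; rewrite /zero_bias_density mulr_ge0 ?invr_ge0 //.
exact/fine_ge0/expectation_X_above_ge0.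
Qed.

End X_above.

Section comparison.
Context {R : realType}.
Context {d1 : measure_display} {T1 : measurableType d1} {P1 : probability T1 R}.
Context {d2 : measure_display} {T2 : measurableType d2} {P2 : probability T2 R}.
Context {X : {RV P1 >-> R}} {Y : {RV P2 >-> R}}.

Lemma has_density_le {fX fY : R -> R} {A : set R} {k : R} :
  has_density X fX -> has_density Y fY -> 0 <= k ->
  (forall u, A u -> 0 <= fY u) -> (forall u, A u -> fX u <= k * fY u) ->
  forall S, measurable S -> S `<=` A ->
    (P1 (X @^-1` S) <= k%:E * P2 (Y @^-1` S))%E.
Proof.
move=> dX dY k0 fY0 fXY S mS SA; rewrite dX // dY //.
by apply: integral_le_scaled => // u /SA; [exact: fY0|exact: fXY].
Qed.

Lemma expectation_X_above_le (t k : R) : 0 <= t -> 0 <= k ->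
  (forall S, measurable S -> S `<=` `]t, +oo[ ->
    P1 (X @^-1` S) <= k%:E * P2 (Y @^-1` S))%E ->
  ('E_P1[X_above X t] <= k%:E * 'E_P2[X_above Y t])%E.
Proof.
move=> t0 k0 PXY; rewrite !expectation_X_above_distribution //.
apply: (ge0_integral_le_scaled_measure _ (A := `]t, +oo[%classic)) => // u.
  by rewrite lee_fin X_above_ge0.
by rewrite /= in_itv/= andbT /X_above => /negP/negbTE ->; rewrite mulr0.
Qed.

Lemma zero_bias_density_le (s2 t k : R) : 0 <= s2 -> 0 <= t -> 0 <= k ->
  (Y : T2 -> R) \in Lfun P2 1 ->
  (forall S, measurable S -> S `<=` `]t, +oo[ ->
    P1 (X @^-1` S) <= k%:E * P2 (Y @^-1` S))%E ->
  zero_bias_density P1 X s2 t <= k * zero_bias_density P2 Y s2 t.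
Proof.
move=> s0 t0 k0 YL1 PXY; rewrite /zero_bias_density mulrCA ler_wpM2l ?invr_ge0 //.
have EY := expectation_X_above_fin_num Y t YL1.
have EXY := expectation_X_above_le t k t0 k0 PXY.
have EX : ('E_P1[X_above X t] \is a fin_num)%E.
  rewrite ge0_fin_numE ?expectation_X_above_ge0 //.
  by apply: le_lt_trans EXY _; rewrite -(fineK EY) -EFinM ltry.
by rewrite -lee_fin EFinM !fineK // fin_numM.
Qed.

End comparison.

Section monotone_density_ratio.
Context {R : realType}.
Context {d1 : measure_display} {T1 : measurableType d1} {P1 : probability T1 R}.
Context {d2 : measure_display} {T2 : measurableType d2} {P2 : probability T2 R}.
Context {X : {RV P1 >-> R}} {Y : {RV P2 >-> R}} {fX fY : R -> R} {x0 : R}.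
Hypothesis dX : has_density X fX.
Hypothesis dY : has_density Y fY.
Hypothesis fY_gt0 : forall t, x0 <= t -> 0 < fY t.
Hypothesis ratio_nonincr : forall s t, x0 <= s -> s <= t -> fX t / fY t <= fX s / fY s.

Lemma density_le_ratio (t u : R) : x0 <= t -> t <= u ->
  fX u <= Num.max (fX t) 0 / fY t * fY u.
Proof.
move=> x0t tu; rewrite -ler_pdivrMr ?fY_gt0 ?(le_trans x0t tu) //.
apply: le_trans (ratio_nonincr _ _ x0t tu) _.
by rewrite ler_pM2r ?invr_gt0 ?fY_gt0 // le_max lexx.
Qed.

Lemma zero_bias_density_le_ratio (s2 t : R) : 0 <= s2 -> 0 <= x0 -> x0 <= t ->
  (Y : T2 -> R) \in Lfun P2 1 ->
  zero_bias_density P1 X s2 t <= Num.max (fX t) 0 / fY t * zero_bias_density P2 Y s2 t.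
Proof.
move=> s0 x00 x0t YL1.
have k0 : 0 <= Num.max (fX t) 0 / fY t.
  by rewrite divr_ge0 ?le_max ?lexx ?orbT // ltW // fY_gt0.
apply: zero_bias_density_le => //; first exact: le_trans x00 x0t.
apply: (has_density_le dX dY k0) => u /=.
all: rewrite in_itv /= andbT => tu.
- exact/ltW/fY_gt0/(le_trans x0t)/ltW.
- exact/density_le_ratio/ltW.
Qed.

Lemma is_interval_negative_tail : is_interval [set u | x0 <= u /\ fX u < 0].
Proof.
move=> a b [x0a fXa] _ z /andP[az _]; have x0z := le_trans x0a az; split => //.
have : fX a / fY a < 0 by rewrite pmulr_llt0 ?invr_gt0 ?fY_gt0.
move=> /(le_lt_trans (ratio_nonincr _ _ x0a az)).
by rewrite pmulr_llt0 ?invr_gt0 ?fY_gt0.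
Qed.

Lemma zero_bias_tail_le {d3 : measure_display} {T3 : measurableType d3}
    {P3 : probability T3 R} (Xs : {RV P3 >-> R}) (s2 x c : R) :
  has_density Xs (zero_bias_density P1 X s2) -> 0 <= s2 -> 0 <= x0 -> x0 <= x ->
  (Y : T2 -> R) \in Lfun P2 1 -> 0 <= c ->
  (forall t, x <= t -> zero_bias_density P2 Y s2 t <= c * fY t) ->
  (P3 (Xs @^-1` `[x, +oo[) <= c%:E * P1 (X @^-1` `[x, +oo[))%E.
Proof.
move=> dXs s0 x00 x0x YL1 c0 zY_le.
pose N := [set u | x0 <= u /\ fX u < 0].
have mN : measurable N := is_interval_measurable is_interval_negative_tail.
have fXN t : x <= t -> (fX \_ (~` N)) t = Num.max (fX t) 0.
  move=> xt; rewrite /patch; case: ifPn => [/set_mem /= nNt|].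
    apply/esym/max_idPl; rewrite leNgt; apply/negP => fXt; apply: nNt.
    by split=> //; exact: le_trans x0x xt.
  by rewrite in_setC negbK => /set_mem [_ /ltW fXt]; apply/esym/max_idPr.
have fXN_ge0 t : `[x, +oo[%classic t -> 0 <= (fX \_ (~` N)) t.
  by rewrite /= in_itv /= andbT => /fXN ->; rewrite le_max lexx orbT.
have zX_le t : `[x, +oo[%classic t ->
    zero_bias_density P1 X s2 t <= c * (fX \_ (~` N)) t.
  rewrite /= in_itv /= andbT => xt; have x0t := le_trans x0x xt; rewrite fXN //.
  apply: le_trans (zero_bias_density_le_ratio s2 t s0 x00 x0t YL1) _.
  rewrite mulrAC -mulrA (mulrC c) ler_wpM2l ?le_max ?lexx ?orbT //.
  by rewrite ler_pdivrMr ?fY_gt0 ?zY_le.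
have mJ : measurable (`[x, +oo[ `&` ~` N).
  by apply: measurableI => //; exact: measurableC.
rewrite dXs; last exact: measurable_itv.
apply: le_trans (integral_le_scaled lebesgue_measure c0 fXN_ge0 zX_le) _.
have -> : (fun u => ((fX \_ (~` N)) u)%:E) = (EFin \o fX) \_ (~` N).
  by rewrite restrict_EFin.
rewrite -integral_mkcondr -dX //.
apply: lee_wpmul2l; first by rewrite lee_fin.
by apply: le_measure; rewrite ?inE; [exact: measurable_funPTI..|move=> w []].
Qed.

End monotone_density_ratio.

Theorem proposition2p2 (R : realType)
  (d1 : measure_display) (T1 : measurableType d1) (P1 : probability T1 R)
  (d2 : measure_display) (T2 : measurableType d2) (P2 : probability T2 R)
  (d3 : measure_display) (T3 : measurableType d3) (P3 : probability T3 R)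
  (X : {RV P1 >-> R}) (Y : {RV P2 >-> R}) (Xs : {RV P3 >-> R})
  (s2 : R) (fX fY : R -> R) (x0 : R) (aY : R -> R) :
  0 < s2 ->
  (X : T1 -> R) \in Lfun P1 2%:E -> ('E_P1[X] = 0)%E -> ('V_P1[X] = s2%:E)%E ->
  (Y : T2 -> R) \in Lfun P2 2%:E -> ('E_P2[Y] = 0)%E -> ('V_P2[Y] = s2%:E)%E ->
  has_density X fX -> has_density Y fY ->
  has_density Xs (zero_bias_density P1 X s2) ->
  0 <= x0 ->
  (forall t, x0 <= t -> 0 < fY t) ->
  (forall s t, x0 <= s -> s <= t -> fX t / fY t <= fX s / fY s) ->
  (forall x, x0 <= x -> forall t, x <= t ->
      zero_bias_density P2 Y s2 t / fY t <= aY x) ->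
  forall x, x0 <= x ->
    (P3 (Xs @^-1` `[x, +oo[) <= (aY x)%:E * P1 (X @^-1` `[x, +oo[))%E.
Proof.
move=> s2_gt0 _ _ _ YL2 _ _ dX dY dXs x0_ge0 fY_gt0 ratio_nonincr aY_bound x x0x.
have YL1 : (Y : T2 -> R) \in Lfun P2 1.
  by apply: Lfun_subset12; rewrite ?fin_num_measure.
have s2_ge0 := ltW s2_gt0.
have x_ge0 := le_trans x0_ge0 x0x.
have aY_ge0 : 0 <= aY x.
  apply: le_trans _ (aY_bound x x0x x (lexx x)).
  by rewrite divr_ge0 ?zero_bias_density_ge0 ?(ltW (fY_gt0 x x0x)).
apply: (zero_bias_tail_le dX dY fY_gt0 ratio_nonincr Xs s2 x (aY x) dXs) => // t xt.
by rewrite -ler_pdivrMr ?fY_gt0 ?(le_trans x0x xt) ?aY_bound.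
Qed.
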